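(* Let $D=\{D_1,\dots,D_n\}$ be a set of pairwise disjoint closed balls in $\mathbb{R}^d$ and $s>0$. The set $W$ output by the algorithm ComputeWSPD$(D,s)$ described below is a WSPD for $D$ with respect to $s$.
   Context: Ball $D_i$ has center $c_i$ and radius $r_i\ge0$. $R(X)$ is the smallest axis-parallel box containing $X$, $L_{\max}(R)$ its longest side length; for balls $C,C'$ with centers $c,c'$ and radii $r,r'$, $d(C,C')=|cc'|-(r+r')$. Point-set well-separation: finite $P,Q$ are $s$-well-separated if there are disjoint balls $C_P\supseteq R(P)$, $C_Q\supseteq R(Q)$ of equal radius $\rho$ with $d(C_P,C_Q)\ge s\rho$. Ball well-separation: for $X\subseteq D$ let $X'=\{c_i:D_i\in X\}$; nonempty $A,B\subseteq D$ are $s$-well-separated if there are disjoint balls $C_{A'}\supseteq R(A')$, $C_{B'}\supseteq R(B')$ of equal radius with one of: (i) $|A|=|B|=1$; (ii) $A=\{D_k\}$, $|B|>1$, $d(c_k,C_{B'})-r_k\ge(3s+4)\mathrm{radius}(C_{B'})$; (iii) symmetric to (ii); (iv) $|A|,|B|>1$ and $d(C_{A'},C_{B'})\ge(3s+4)\mathrm{radius}(C_{A'})$ (if all balls of $A\cup B$ have radius $0$, the point-set notion for $A',B'$ is used instead). A WSPD for $D$ w.r.t. $s$ is a set of pairs $\{A_i,B_i\}$ of nonempty subsets of $D$, each $s$-well-separated, such that every two distinct balls $D_p,D_q$ are separated (one in $A_i$, other in $B_i$) by exactly one pair. Algorithm ComputeWSPD$(D,s)$: let $F=\{c_1,\dots,c_n\}$;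 let $T$ be a (Callahan–Kosaraju) split tree of $F$: a binary tree whose leaves are the points of $F$, each node $u$ storing $R(S_u)$ where $S_u$ is the set of points at leaves of the subtree of $u$; let $W'$ be the WSPD of $F$ w.r.t. $3s+6$ computed from $T$ by the Callahan–Kosaraju algorithm (each pair is $\{S_v,S_w\}$ for nodes $v,w$ of $T$). For $X'\subseteq F$ let $X$ denote the set of balls whose centers lie in $X'$. Start with $W=\emptyset$; for each $\{A',B'\}\in W'$: if $|A'|=|B'|=1$ or $|A'|,|B'|>1$, add $\{A,B\}$ to $W$; otherwise, say $A'=\{c_k\}=S_v$ ($v$ a leaf) and $B'=S_w$, add to $W$ the pairs produced by FindPairs$(v,w)$. FindPairs$(v,w)$ with $S_v=\{c_k\}$: let $C_w$ be the ball of radius $(\sqrt d/2)L_{\max}(R(S_w))$ centered at the center of $R(S_w)$; if $d(c_k,C_w)-r_k\ge(3s+4)\,\mathrm{radius}(C_w)$, return the single pair $\{\{D_k\},\text{balls with centers in }S_w\}$; otherwise return the union of FindPairs$(v,w_l)$ and FindPairs$(v,w_r)$ for the two children $w_l,w_r$ of $w$. *)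

From HB Require Import structures.
From mathcomp Require Import all_boot all_order all_algebra.
From mathcomp Require Import reals.
Set Implicit Arguments. Unset Strict Implicit. Unset Printing Implicit Defensive.
Import Order.TTheory GRing.Theory Num.Theory.
Local Open Scope ring_scope.

(* Points of R^d are row vectors 'rV[R]_d; coordinate k of x is x ord0 k. *)

Definition edist (R : realType) (d : nat) (x y : 'rV[R]_d) : R :=
  Num.sqrt (\sum_(k < d) (x ord0 k - y ord0 k) ^+ 2).

Definition balls_disjoint (R : realType) (d : nat)
    (p : 'rV[R]_d) (rho : R) (q : 'rV[R]_d) (rho' : R) : Prop :=
  forall x : 'rV[R]_d, ~ (edist x p <= rho /\ edist x q <= rho').

(* x lies in R(X'), the smallest axis-parallel box containing the
   (nonempty) point set X' = {c_i : i in X}. *)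
Definition in_box (R : realType) (d n : nat) (c : 'I_n -> 'rV[R]_d)
    (X : {set 'I_n}) (x : 'rV[R]_d) : Prop :=
  forall k : 'I_d,
    (exists2 i, i \in X & c i ord0 k <= x ord0 k) /\
    (exists2 j, j \in X & x ord0 k <= c j ord0 k).

Definition ball_contains_box (R : realType) (d n : nat) (c : 'I_n -> 'rV[R]_d)
    (X : {set 'I_n}) (p : 'rV[R]_d) (rho : R) : Prop :=
  forall x, in_box c X x -> edist x p <= rho.

Definition pt_well_sep (R : realType) (d n : nat) (s : R)
    (c : 'I_n -> 'rV[R]_d) (P Q : {set 'I_n}) : Prop :=
  exists (p q : 'rV[R]_d) (rho : R),
    [/\ 0 <= rho, ball_contains_box c P p rho, ball_contains_box c Q q rho,
        balls_disjoint p rho q rho & s * rho <= edist p q - (rho + rho)].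

(* Ball s-well-separation of A = {D_i : i in A}, B = {D_i : i in B}
   (balls D_i with center c i and radius r i). *)
Definition ball_well_sep (R : realType) (d n : nat) (s : R)
    (c : 'I_n -> 'rV[R]_d) (r : 'I_n -> R) (A B : {set 'I_n}) : Prop :=
  if [forall i in A :|: B, r i == 0] then pt_well_sep s c A B
  else exists (p q : 'rV[R]_d) (rho : R),
    [/\ 0 <= rho, ball_contains_box c A p rho, ball_contains_box c B q rho,
        balls_disjoint p rho q rho &
        [\/ #|A| = 1%N /\ #|B| = 1%N,
            exists k, [/\ A = [set k], (1 < #|B|)%N &
                (3 * s + 4) * rho <= edist (c k) q - rho - r k],
            exists k, [/\ B = [set k], (1 < #|A|)%N &
                (3 * s + 4) * rho <= edist (c k) p - rho - r k]
          | [/\ (1 < #|A|)%N, (1 < #|B|)%N &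
                (3 * s + 4) * rho <= edist p q - (rho + rho)]]].

Definition separates (n : nat) (pr : {set 'I_n} * {set 'I_n}) (p q : 'I_n) : bool :=
  ((p \in pr.1) && (q \in pr.2)) || ((p \in pr.2) && (q \in pr.1)).

Definition separates_exactly_once (n : nat) (W : seq ({set 'I_n} * {set 'I_n})) : Prop :=
  forall p q : 'I_n, p != q -> count (fun pr => separates pr p q) W = 1%N.

Definition pt_WSPD (R : realType) (d n : nat) (s : R) (c : 'I_n -> 'rV[R]_d)
    (W : seq ({set 'I_n} * {set 'I_n})) : Prop :=
  (forall pr, pr \in W -> [/\ pr.1 != set0, pr.2 != set0 & pt_well_sep s c pr.1 pr.2])
  /\ separates_exactly_once W.

Definition ball_WSPD (R : realType) (d n : nat) (s : R) (c : 'I_n -> 'rV[R]_d)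
    (r : 'I_n -> R) (W : seq ({set 'I_n} * {set 'I_n})) : Prop :=
  (forall pr, pr \in W -> [/\ pr.1 != set0, pr.2 != set0 & ball_well_sep s c r pr.1 pr.2])
  /\ separates_exactly_once W.

Inductive stree (n : nat) : Type :=
| SLeaf of 'I_n
| SNode of stree n & stree n.
Arguments SLeaf {n}.
Arguments SNode {n}.

Fixpoint leaves (n : nat) (t : stree n) : seq 'I_n :=
  match t with SLeaf i => [:: i] | SNode l r => leaves l ++ leaves r end.

Definition leafset (n : nat) (t : stree n) : {set 'I_n} := [set i in leaves t].

Fixpoint subtree (n : nat) (u t : stree n) : Prop :=
  u = t \/ match t with SLeaf _ => False | SNode l r => subtree u l \/ subtree u r end.

Definition bmin (R : realType) (d n : nat) (c : 'I_n -> 'rV[R]_d)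
    (X : {set 'I_n}) (k : 'I_d) : R :=
  match [pick i in X] with
  | Some i0 => \big[Num.min/c i0 ord0 k]_(i in X) c i ord0 k
  | None => 0 end.
Definition bmax (R : realType) (d n : nat) (c : 'I_n -> 'rV[R]_d)
    (X : {set 'I_n}) (k : 'I_d) : R :=
  match [pick i in X] with
  | Some i0 => \big[Num.max/c i0 ord0 k]_(i in X) c i ord0 k
  | None => 0 end.

Definition Lmax (R : realType) (d n : nat) (c : 'I_n -> 'rV[R]_d) (X : {set 'I_n}) : R :=
  \big[Num.max/0]_(k < d) (bmax c X k - bmin c X k).

Definition bcenter (R : realType) (d n : nat) (c : 'I_n -> 'rV[R]_d) (X : {set 'I_n})
  : 'rV[R]_d := \row_k ((bmin c X k + bmax c X k) / 2).

(* FindPairs(v,w) where S_v = {c_k}. The paper leaves the case "w is a leaf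
   and the test fails" unspecified (it cannot occur for disjoint balls);
   we return no pair there. *)
Fixpoint find_pairs (R : realType) (d n : nat) (s : R) (c : 'I_n -> 'rV[R]_d)
    (r : 'I_n -> R) (k : 'I_n) (w : stree n) : seq ({set 'I_n} * {set 'I_n}) :=
  let Sw := leafset w in
  let rho := Num.sqrt (d%:R) / 2 * Lmax c Sw in
  if (3 * s + 4) * rho <= edist (c k) (bcenter c Sw) - rho - r k
  then [:: ([set k], Sw)]
  else match w with
       | SLeaf _ => [::]
       | SNode wl wr => find_pairs s c r k wl ++ find_pairs s c r k wr
       end.

Definition process_pair (R : realType) (d n : nat) (s : R) (c : 'I_n -> 'rV[R]_d)
    (r : 'I_n -> R) (vw : stree n * stree n) : seq ({set 'I_n} * {set 'I_n}) :=
  let A := leafset vw.1 in let B := leafset vw.2 in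
  if ((#|A| == 1%N) && (#|B| == 1%N)) || ((1 < #|A|)%N && (1 < #|B|)%N)
  then [:: (A, B)]
  else match vw with
       | (SLeaf k, w) => find_pairs s c r k w
       | (v, SLeaf k) => find_pairs s c r k v
       | _ => [::]
       end.

(* ComputeWSPD(D,s), given the split tree's WSPD W' of F w.r.t. 3s+6. *)
Definition compute_wspd (R : realType) (d n : nat) (s : R) (c : 'I_n -> 'rV[R]_d)
    (r : 'I_n -> R) (W' : seq (stree n * stree n)) : seq ({set 'I_n} * {set 'I_n}) :=
  flatten [seq process_pair s c r vw | vw <- W'].

Fixpoint pairs_of_nodes (n : nat) (T : stree n) (W' : seq (stree n * stree n)) : Prop :=
  match W' with
  | [::] => True
  | vw :: W => (subtree vw.1 T /\ subtree vw.2 T) /\ pairs_of_nodes T W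
  end.

(* Every pair of W' separates its two point sets with the constant 3s+6 >= 3s+4,
   so a pair whose sides are both singletons or both of size > 1 is already
   ball-well-separated, with the same enclosing balls.  A pair {c_k}, S_w is
   refined by FindPairs into the maximal subtrees whose enclosing ball passes
   the distance test.  The recursion never gets stuck: at a leaf j the
   enclosing ball is the point c_j, and the test reduces to r_k <= |c_k c_j|,
   which holds because the balls are disjoint.  Hence the leaf sets of the
   returned subtrees partition S_w, and every pair of balls is still separated
   exactly once. *)
From HB Require Import structures.
From mathcomp Require Import all_boot all_order all_algebra.
From mathcomp Require Import reals.
From mathcomp Require Import ring lra.
Set Implicit Arguments. Unset Strict Implicit. Unset Printing Implicit Defensive.
Import Order.TTheory GRing.Theory Num.Theory.
Local Open Scope ring_scope.

Section EuclideanDistance.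
Variables (R : realType) (d : nat).
Implicit Types x y p q : 'rV[R]_d.

Lemma edist_ge0 x y : 0 <= edist x y.
Proof. exact: sqrtr_ge0. Qed.

Lemma edistC x y : edist x y = edist y x.
Proof. by rewrite /edist; congr Num.sqrt; apply: eq_bigr => k _; rewrite -sqrrN opprB. Qed.

Lemma edistxx x : edist x x = 0.
Proof. by rewrite /edist big1 ?sqrtr0 // => k _; rewrite subrr expr0n. Qed.

Lemma edist_le_sqr x y rho : 0 <= rho ->
  (edist x y <= rho) = (\sum_(k < d) (x ord0 k - y ord0 k) ^+ 2 <= rho ^+ 2).
Proof.
move=> rho_ge0; rewrite /edist -{1}(ger0_norm rho_ge0) -sqrtr_sqr ler_sqrt //.
exact: sqr_ge0.
Qed.

Lemma edist_le0 x y : (edist x y <= 0) = (x == y).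
Proof.
apply/idP/eqP => [|->]; last by rewrite edistxx.
rewrite edist_le_sqr // expr0n /= => sum_le0.
have sum_eq0 : \sum_(k < d) (x ord0 k - y ord0 k) ^+ 2 = 0.
  by apply/le_anti; rewrite sum_le0 sumr_ge0 // => k _; apply: sqr_ge0.
apply/rowP => k; apply/eqP; rewrite -subr_eq0 -sqrf_eq0; apply/eqP.
by move/psumr_eq0P: sum_eq0; apply=> // i _; apply: sqr_ge0.
Qed.

Lemma edist_le_double x p q rho :
  edist x p <= rho -> edist x q <= rho -> edist p q <= 2 * rho.
Proof.
move=> xp xq; have rho_ge0 : 0 <= rho by apply: le_trans xp; apply: edist_ge0.
move: xp xq; rewrite !edist_le_sqr ?mulr_ge0 // => xp xq.
have -> : (2 * rho) ^+ 2 = 2 * rho ^+ 2 + 2 * rho ^+ 2 by ring.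
apply: le_trans (lerD (ler_wpM2l _ xp) (ler_wpM2l _ xq)) => //.
rewrite !mulr_sumr -big_split /=; apply: ler_sum => k _; rewrite -subr_ge0.
(* parallelogram law, coordinatewise *)
set a := x ord0 k; set b := p ord0 k; set e := q ord0 k.
have -> : 2 * (a - b) ^+ 2 + 2 * (a - e) ^+ 2 - (b - e) ^+ 2 = (b + e - 2 * a) ^+ 2
  by ring.
exact: sqr_ge0.
Qed.

End EuclideanDistance.

Section Boxes.
Variables (R : realType) (d n : nat) (c : 'I_n -> 'rV[R]_d).
Implicit Types (X : {set 'I_n}) (x : 'rV[R]_d).

Definition box_radius X : R := Num.sqrt (d%:R) / 2 * Lmax c X.

Lemma bmin_le {X} k {i} : i \in X -> bmin c X k <= c i ord0 k.
Proof.
rewrite /bmin; case: pickP => [i0 _ iX|noX iX]; first exact: bigmin_le_cond.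
by move: (noX i); rewrite iX.
Qed.

Lemma bmax_ge {X} k {i} : i \in X -> c i ord0 k <= bmax c X k.
Proof.
rewrite /bmax; case: pickP => [i0 _ iX|noX iX]; last by move: (noX i); rewrite iX.
exact: (le_bigmax_cond _ (fun j => c j ord0 k)).
Qed.

Lemma bmin_set1 j k : bmin c [set j] k = c j ord0 k.
Proof.
rewrite /bmin; case: pickP => [i|/(_ j)]; last by rewrite set11.
by rewrite inE => /eqP ->; rewrite big_set1E minxx.
Qed.

Lemma bmax_set1 j k : bmax c [set j] k = c j ord0 k.
Proof.
rewrite /bmax; case: pickP => [i|/(_ j)]; last by rewrite set11.
by rewrite inE => /eqP ->; rewrite big_set1E maxxx.
Qed.

Lemma Lmax_ge0 X : 0 <= Lmax c X.
Proof. exact: bigmax_ge_id. Qed.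

Lemma side_le_Lmax X k : bmax c X k - bmin c X k <= Lmax c X.
Proof. exact: (le_bigmax _ (fun k => bmax c X k - bmin c X k)). Qed.

Lemma box_radius_ge0 X : 0 <= box_radius X.
Proof. by rewrite mulr_ge0 ?divr_ge0 ?sqrtr_ge0 ?Lmax_ge0. Qed.

Lemma box_radius_set1 j : box_radius [set j] = 0.
Proof.
rewrite /box_radius; suff -> : Lmax c [set j] = 0 by rewrite mulr0.
apply/le_anti; rewrite Lmax_ge0 andbT; apply: bigmax_le => // k _.
by rewrite bmin_set1 bmax_set1 subrr.
Qed.

Lemma bcenter_set1 j : bcenter c [set j] = c j.
Proof. by apply/rowP => k; rewrite mxE bmin_set1 bmax_set1; field. Qed.

Lemma in_box_mem X i : i \in X -> in_box c X (c i).
Proof. by move=> iX k; split; exists i. Qed.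

Lemma in_box_set1 j x : in_box c [set j] x -> x = c j.
Proof.
move=> jx; apply/rowP => k; have [[i + ix] [i' + xi']] := jx k.
by rewrite !inE => /eqP eq_ij /eqP eq_i'j; subst i i'; apply/le_anti; rewrite ix xi'.
Qed.

(* each coordinate is within Lmax/2 of the center, and d such terms add up
   to (sqrt d / 2 * Lmax)^2 *)
Lemma in_box_edist_bcenter X x : in_box c X x -> edist x (bcenter c X) <= box_radius X.
Proof.
move=> xX; set L := Lmax c X; rewrite edist_le_sqr ?box_radius_ge0 //.
apply: (@le_trans _ _ (\sum_(k < d) (L / 2) ^+ 2)).
  apply: ler_sum => k _; rewrite /bcenter mxE.
  have [[i iX ix] [j jX xj]] := xX k.
  have := le_trans (bmin_le k iX) ix; have := le_trans xj (bmax_ge k jX).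
  have := side_le_Lmax X k; rewrite -/L.
  set a := x ord0 k; set u := bmin c X k; set v := bmax c X k => side xv ux.
  rewrite -subr_ge0.
  have -> : (L / 2) ^+ 2 - (a - (u + v) / 2) ^+ 2 =
            (L / 2 - (a - (u + v) / 2)) * (L / 2 + (a - (u + v) / 2)) by ring.
  by apply: mulr_ge0; lra.
rewrite sumr_const card_ord -[_ *+ d]mulr_natl /box_radius -/L.
have := sqr_sqrtr (ler0n R d); set t := Num.sqrt _ => <-.
by rewrite le_eqVlt; apply/orP; left; apply/eqP; ring.
Qed.

End Boxes.

Section SplitTrees.
Variable n : nat.
Implicit Types (t u v w : stree n) (k : 'I_n).

Lemma leafset_leaf k : leafset (SLeaf k) = [set k].
Proof. by apply/setP => i; rewrite !inE. Qed.

Lemma leafset_node v w : leafset (SNode v w) = leafset v :|: leafset w.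
Proof. by apply/setP => i; rewrite !inE /= mem_cat. Qed.

Lemma leafset_neq0 t : leafset t != set0.
Proof.
apply/set0Pn; elim: t => [k|v [i iv] w _]; first by exists k; rewrite leafset_leaf set11.
by exists i; rewrite leafset_node inE iv.
Qed.

Lemma card_leafset t : uniq (leaves t) -> #|leafset t| = size (leaves t).
Proof. by move=> uniq_t; rewrite /leafset cardsE; apply/card_uniqP. Qed.

Lemma card_leafset_node v w :
  uniq (leaves (SNode v w)) -> (1 < #|leafset (SNode v w)|)%N.
Proof.
move=> uniq_vw; rewrite card_leafset //= size_cat.
have size_gt0 t : (0 < size (leaves t))%N.
  by elim: t => //= t IHt u _; rewrite size_cat addn_gt0 IHt.
exact: leq_add (size_gt0 v) (size_gt0 w).
Qed.

Lemma subtree_uniq u t : subtree u t -> uniq (leaves t) -> uniq (leaves u).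
Proof.
elim: t => [k|v IHv w IHw] /= [-> //|//].
by rewrite cat_uniq => -[uv|uw] /and3P [uniq_v _ uniq_w]; [apply: IHv | apply: IHw].
Qed.

End SplitTrees.

Lemma pt_well_sep_disjoint (R : realType) (d n : nat) (s : R) (c : 'I_n -> 'rV[R]_d)
    (A B : {set 'I_n}) :
  pt_well_sep s c A B -> [disjoint A & B].
Proof.
move=> [p [q [rho [_ pA qB disj_pq _]]]]; apply/pred0P => i /=.
apply/negP => /andP [iA iB]; apply: (disj_pq (c i)).
by split; [apply: pA | apply: qB]; apply: in_box_mem.
Qed.

Lemma separatesC (n : nat) (A B : {set 'I_n}) p q :
  separates (A, B) p q = separates (B, A) p q.
Proof. by rewrite /separates /= orbC. Qed.

Lemma separates_set1U (n : nat) (k p q : 'I_n) (A B : {set 'I_n}) :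
  k \notin A -> k \notin B -> [disjoint A & B] ->
  separates ([set k], A :|: B) p q =
  (separates ([set k], A) p q + separates ([set k], B) p q)%N :> nat.
Proof.
move=> kA kB AB; rewrite /separates /= !inE.
have notAB i : i \in A -> i \in B = false by apply: disjointFr.
case: (eqVneq p k) => [->|_]; case: (eqVneq q k) => [->|_] /=;
  rewrite ?(negbTE kA) ?(negbTE kB) ?andbF ?orbF ?andbT //=.
- by case: (boolP (q \in A)) => [/notAB ->|].
- by case: (boolP (p \in A)) => [/notAB ->|].
Qed.

Section BallSeparation.
Variables (R : realType) (d n : nat) (c : 'I_n -> 'rV[R]_d) (r : 'I_n -> R) (s : R).
Hypothesis r_ge0 : forall i, 0 <= r i.
Hypothesis disjoint_balls : forall i j, i != j -> balls_disjoint (c i) (r i) (c j) (r j).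
Hypothesis s_gt0 : 0 < s.
Implicit Types (A B : {set 'I_n}) (k : 'I_n) (w : stree n).

Definition ball_well_sep_pair (pr : {set 'I_n} * {set 'I_n}) : Prop :=
  [/\ pr.1 != set0, pr.2 != set0 & ball_well_sep s c r pr.1 pr.2].

Lemma centers_inj : injective c.
Proof.
move=> i j eq_c; apply/eqP; apply: contraT => /disjoint_balls /(_ (c i)); case.
by split; rewrite ?[c i]eq_c edistxx.
Qed.

Definition far_from_box k B : bool :=
  (3 * s + 4) * box_radius c B <= edist (c k) (bcenter c B) - box_radius c B - r k.

Lemma find_pairsE k w :
  find_pairs s c r k w =
  if far_from_box k (leafset w) then [:: ([set k], leafset w)]
  else if w is SNode wl wr then find_pairs s c r k wl ++ find_pairs s c r k wr
  else [::].
Proof. by case: w. Qed.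

Lemma far_from_box_set1 k j : k != j -> far_from_box k [set j].
Proof.
move=> kj; rewrite /far_from_box box_radius_set1 bcenter_set1 !mulr0 !subr0 subr_ge0.
rewrite leNgt; apply/negP => near_kj.
by apply: (@disjoint_balls k j kj (c j)); rewrite edistxx r_ge0 edistC ltW.
Qed.

Lemma far_from_box_gap k B : B != set0 -> k \notin B -> far_from_box k B ->
  2 * box_radius c B < edist (c k) (bcenter c B).
Proof.
rewrite /far_from_box => /set0Pn [j jB] kB far_kB.
have := box_radius_ge0 c B; rewrite le_eqVlt => /orP [/eqP rho0|rho_gt0].
  (* a box of radius zero is the single point c_j, and c_k <> c_j *)
  rewrite -rho0 mulr0 ltNge edist_le0.
  have := in_box_edist_bcenter (in_box_mem c jB); rewrite -rho0 edist_le0 => /eqP <-.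
  by apply/eqP => /centers_inj eq_kj; rewrite eq_kj jB in kB.
have := r_ge0 k; have := mulr_gt0 s_gt0 rho_gt0; nra.
Qed.

Lemma far_from_box_well_sep k B : B != set0 -> k \notin B -> far_from_box k B ->
  ball_well_sep s c r [set k] B.
Proof.
move=> B0 kB far_kB; have gap := far_from_box_gap B0 kB far_kB.
move: far_kB; rewrite /far_from_box.
set rho := box_radius c B; set q := bcenter c B => far_kB.
have rho_ge0 : 0 <= rho := box_radius_ge0 c B.
have kball : ball_contains_box c [set k] (c k) rho.
  by move=> x /in_box_set1 ->; rewrite edistxx.
have Bball : ball_contains_box c B q rho by move=> x /in_box_edist_bcenter.
have disj : balls_disjoint (c k) rho q rho.
  by move=> x [/edist_le_double kx /kx]; rewrite leNgt gap.
have := r_ge0 k; have := mulr_ge0 (ltW s_gt0) rho_ge0 => srho rk.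
rewrite /ball_well_sep; case: ifP => _; exists (c k), q, rho; split => //; first nra.
have : (0 < #|B|)%N by rewrite card_gt0.
case: (ltngtP #|B| 1) => // [B1|->] _; last by apply: Or41; rewrite cards1.
by apply: Or42; exists k.
Qed.

Lemma pt_well_sep_ball_well_sep A B : pt_well_sep (3 * s + 6) c A B ->
  ((#|A| == 1%N) && (#|B| == 1%N)) || ((1 < #|A|)%N && (1 < #|B|)%N) ->
  ball_well_sep s c r A B.
Proof.
move=> [p [q [rho [rho_ge0 pA qB disj sep]]]] sizes.
have := mulr_ge0 (ltW s_gt0) rho_ge0 => srho.
rewrite /ball_well_sep; case: ifP => _; exists p, q, rho; split => //; first nra.
case/orP: sizes => /andP [A1 B1]; first by apply: Or41; split; apply/eqP.
by apply: Or44; split => //; nra.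
Qed.

Lemma find_pairs_well_sep k w : k \notin leafset w ->
  forall pr, pr \in find_pairs s c r k w -> ball_well_sep_pair pr.
Proof.
elim: w => [j|wl IHl wr IHr] kw pr; rewrite find_pairsE; case: ifP => // far_kw;
  last first.
  move: kw; rewrite leafset_node inE negb_or => /andP [kwl kwr].
  by rewrite mem_cat => /orP [/IHl|/IHr]; apply.
all: rewrite inE => /eqP -> /=; split; [apply/set0Pn; exists k; exact: set11 |
  exact: leafset_neq0 | exact: far_from_box_well_sep (leafset_neq0 _) kw far_kw].
Qed.

Lemma count_find_pairs k w : uniq (leaves w) -> k \notin leafset w -> forall p q,
  count (fun pr => separates pr p q) (find_pairs s c r k w) =
  separates ([set k], leafset w) p q.
Proof.
elim: w => [j|wl IHl wr IHr] uniq_w kw p q; rewrite find_pairsE; case: ifP => far_kw.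
- by rewrite /= addn0.
- by move: kw far_kw; rewrite leafset_leaf in_set1 => /far_from_box_set1 ->.
- by rewrite /= addn0.
move: uniq_w; rewrite /= cat_uniq => /and3P [uniq_l disj_lr uniq_r].
move: kw; rewrite leafset_node inE negb_or => /andP [kwl kwr].
rewrite count_cat IHl // IHr // separates_set1U //.
apply/pred0P => i /=; rewrite !inE.
by apply: contraNF disj_lr => /andP [il ir]; apply/hasP; exists i.
Qed.

Lemma process_pair_correct v w : uniq (leaves v) -> uniq (leaves w) ->
  pt_well_sep (3 * s + 6) c (leafset v) (leafset w) ->
  (forall pr, pr \in process_pair s c r (v, w) -> ball_well_sep_pair pr) /\
  (forall p q, count (fun pr => separates pr p q) (process_pair s c r (v, w)) =
     separates (leafset v, leafset w) p q).
Proof.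
move=> uniq_v uniq_w vw_sep; rewrite /process_pair; case: ifP => [sizes|].
  split=> [pr|p q]; last by rewrite /= addn0.
  rewrite inE => /eqP ->; split; try exact: leafset_neq0.
  exact: pt_well_sep_ball_well_sep.
move/pt_well_sep_disjoint: vw_sep.
case: v w uniq_v uniq_w => [k|vl vr] [j|wl wr] uniq_v uniq_w disj_vw not_sizes.
- by move: not_sizes; rewrite !leafset_leaf !cards1.
- have kw : k \notin leafset (SNode wl wr) by rewrite -disjoints1 -leafset_leaf.
  split=> [|p q]; first exact: find_pairs_well_sep.
  by rewrite count_find_pairs // leafset_leaf.
- have jv : j \notin leafset (SNode vl vr).
    by rewrite -disjoints1 -leafset_leaf disjoint_sym.
  split=> [|p q]; first exact: find_pairs_well_sep.
  by rewrite count_find_pairs // separatesC leafset_leaf.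
- by move: not_sizes; rewrite !card_leafset_node // orbT.
Qed.

Lemma compute_wspd_correct T W' : uniq (leaves T) -> pairs_of_nodes T W' ->
  (forall pr, pr \in [seq (leafset vw.1, leafset vw.2) | vw <- W'] ->
     pt_well_sep (3 * s + 6) c pr.1 pr.2) ->
  (forall pr, pr \in compute_wspd s c r W' -> ball_well_sep_pair pr) /\
  (forall p q, count (fun pr => separates pr p q) (compute_wspd s c r W') =
     count (fun pr => separates pr p q) [seq (leafset vw.1, leafset vw.2) | vw <- W']).
Proof.
move=> uniq_T; elim: W' => [|[v w] W IH] //= [[vT wT] WT] W_sep.
case: (IH WT) => [pr prW|IH_sep IH_count]; first by apply: W_sep; rewrite inE prW orbT.
have [vw_sep vw_count] := process_pair_correct (subtree_uniq vT uniq_T)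
  (subtree_uniq wT uniq_T) (W_sep _ (mem_head _ _)).
rewrite /compute_wspd /=; split=> [pr|p q]; last by rewrite count_cat vw_count -IH_count.
by rewrite mem_cat => /orP [/vw_sep|/IH_sep].
Qed.

End BallSeparation.

Theorem lemma5 (R : realType) (d n : nat) (c : 'I_n -> 'rV[R]_d) (r : 'I_n -> R)
    (s : R) (T : stree n) (W' : seq (stree n * stree n)) :
  (forall i, 0 <= r i) ->
  (forall i j, i != j -> balls_disjoint (c i) (r i) (c j) (r j)) ->
  0 < s ->
  perm_eq (leaves T) (enum 'I_n) ->
  pairs_of_nodes T W' ->
  pt_WSPD (3 * s + 6) c [seq (leafset vw.1, leafset vw.2) | vw <- W'] ->
  ball_WSPD s c r (compute_wspd s c r W').
Proof.
move=> r_ge0 disj s_gt0 perm_T W'T [W'_sep W'_once].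
have uniq_T : uniq (leaves T) by rewrite (perm_uniq perm_T) enum_uniq.
case: (compute_wspd_correct r_ge0 disj s_gt0 uniq_T W'T) => [pr /W'_sep [] //|sep count_eq].
by split=> // p q pq; rewrite count_eq W'_once.
Qed.
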